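(* Consider a single-parameter setting with $n$ agents, single-dimensional signals, and a downward-closed feasibility family $\mathcal{I}\subseteq 2^{[n]}$, in which every valuation $v_i$ is $d$-SOS ($d\ge1$). Then the Random Sampling Vickrey (RS-V) mechanism is universally ex-post IC-IR, and for every true signal profile $\mathbf{s}$ (with truthful reports) its expected welfare is at least $\frac{1}{2(d+1)}\max_{S\in\mathcal{I}}\sum_{i\in S}v_i(\mathbf{s})$. In particular, for SOS valuations ($d=1$) it is a $4$-approximation to the optimal social welfare.
   Context: Model: agents $1,\dots,n$; agent $j$ has a private signal $s_j\in\mathbb{R}_{\ge0}$; the value of agent $j$ for being served is $v_j(\mathbf{s})\ge0$, a publicly known function of the full profile $\mathbf{s}=(s_1,\dots,s_n)$, weakly increasing in every coordinate and strictly increasing in $s_j$. $\mathcal{I}$ is downward closed (subsets of feasible sets are feasible). A deterministic mechanism maps reported signals to a served set in $\mathcal{I}$ (indicators $x_i\in\{0,1\}$) and payments $p_i$; agent $i$ with true signal $s_i$ reporting $s_i'$ while others report truthfully $\mathbf{s}_{-i}$ gets utility $x_i(s_i',\mathbf{s}_{-i})v_i(s_i,\mathbf{s}_{-i})-p_i(s_i',\mathbf{s}_{-i})$. Ex-post IC: for every true profile, truthful reporting maximizes this utility; ex-post IR: truthful utility is nonnegative. A randomized mechanism is a distribution over deterministic ones; it is universally ex-post IC-IR if every deterministic mechanism in its support is. A deterministic allocation rule is monotone if for all $i,\mathbf{s}_{-i}$ and $s_i\le s_i'$, $x_i(s_i,\mathbf{s}_{-i})=1$ implies $x_i(s_i',\mathbf{s}_{-i})=1$;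 by a known characterization, a deterministic allocation rule admits payments making it ex-post IC-IR iff it is monotone, and the mechanism uses such payments. RS-V: elicit reports $\tilde{\mathbf{s}}$; partition agents into $A,B$ uniformly at random (each agent independently in each part w.p. 1/2); for $i\in B$ let $w_i=v_i(\tilde{\mathbf{s}}_A,\tilde s_i,\mathbf{0}_{B\setminus\{i\}})$; serve a set in $\arg\max_{S\in\mathcal{I},S\subseteq B}\sum_{i\in S}w_i$ (ties broken by a fixed rule); agents in $A$ are never served. $d$-SOS: for every coordinate $j$, $s_j\ge 0$, $\delta\ge0$, and $\mathbf{s}'_{-j}\le\mathbf{s}_{-j}$ coordinate-wise, $d\big(v(\mathbf{s}'_{-j},s_j+\delta)-v(\mathbf{s}'_{-j},s_j)\big)\ge v(\mathbf{s}_{-j},s_j+\delta)-v(\mathbf{s}_{-j},s_j)$; SOS means $d=1$. *)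

From Stdlib Require Import Reals.
From mathcomp Require Import all_boot.
Set Implicit Arguments. Unset Strict Implicit. Unset Printing Implicit Defensive.

Local Open Scope R_scope.

Definition profile (n : nat) := 'I_n -> R.

Definition nonneg_profile n (s : profile n) : Prop := forall k, 0 <= s k.

Definition upd n (s : profile n) (j : 'I_n) (x : R) : profile n :=
  fun k => if k == j then x else s k.

Definition rsum n (S : {set 'I_n}) (f : 'I_n -> R) : R :=
  \big[Rplus/0]_(i in S) f i.

(* Standing assumptions on the valuations v_j (valuation of agent j as a
   publicly known function of the full profile), on nonnegative profiles. *)
Definition valuations_ok n (v : 'I_n -> profile n -> R) : Prop :=
  (forall j s, nonneg_profile s -> 0 <= v j s) /\
  (forall j s s', nonneg_profile s -> (forall k, s k <= s' k) ->
      v j s <= v j s') /\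
  (forall j s x y, nonneg_profile s -> 0 <= x -> x < y ->
      v j (upd s j x) < v j (upd s j y)).

Definition dSOS n (d : R) (vf : profile n -> R) : Prop :=
  forall (j : 'I_n) (s s' : profile n) (delta : R),
    nonneg_profile s -> nonneg_profile s' -> 0 <= delta ->
    (forall k, k != j -> s' k <= s k) ->
    d * (vf (upd s' j (s j + delta)) - vf (upd s' j (s j)))
      >= vf (upd s j (s j + delta)) - vf s.

Definition downward_closed n (I : {set {set 'I_n}}) : Prop :=
  forall S T : {set 'I_n}, S \in I -> T \subset S -> T \in I.

Definition argmax_rule n (I : {set {set 'I_n}})
    (tb : {set 'I_n} -> ('I_n -> R) -> {set 'I_n}) : Prop :=
  forall B w,
    tb B w \subset B /\ tb B w \in I /\
    (forall S, S \in I -> S \subset B -> rsum S w <= rsum (tb B w) w).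

(* RS-V weights, for a fixed partition (A = ~: B, B):
   for i in B, w_i = v_i(s_A, s_i, 0_{B \ {i}}); agents in A get weight 0
   (they are never considered). *)
Definition rsv_weights n (v : 'I_n -> profile n -> R) (B : {set 'I_n})
    (s : profile n) : 'I_n -> R :=
  fun i => if i \in B then
             v i (fun k => if (k \notin B) || (k == i) then s k else 0)
           else 0.

Definition rsv_alloc n (v : 'I_n -> profile n -> R)
    (tb : {set 'I_n} -> ('I_n -> R) -> {set 'I_n})
    (B : {set 'I_n}) (s : profile n) : {set 'I_n} :=
  tb B (rsv_weights v B s).

Definition utility n (v : 'I_n -> profile n -> R) (x : profile n -> {set 'I_n})
    (p : 'I_n -> profile n -> R) (i : 'I_n) (s rep : profile n) : R :=
  (if i \in x rep then v i s else 0) - p i rep.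

Definition expost_IC_IR n (v : 'I_n -> profile n -> R)
    (x : profile n -> {set 'I_n}) (p : 'I_n -> profile n -> R) : Prop :=
  (forall s i r, nonneg_profile s -> 0 <= r ->
     utility v x p i s s >= utility v x p i s (upd s i r)) /\
  (forall s i, nonneg_profile s -> utility v x p i s s >= 0).

(* RS-V draws B uniformly among all subsets (each agent independently in
   A or B w.p. 1/2); universally ex-post IC-IR means every deterministic
   mechanism in the support (every B) can be (and is) equipped with payments
   making it ex-post IC-IR. *)
Definition rsv_universally_IC_IR n (v : 'I_n -> profile n -> R)
    (tb : {set 'I_n} -> ('I_n -> R) -> {set 'I_n}) : Prop :=
  forall B : {set 'I_n},
    exists p : 'I_n -> profile n -> R, expost_IC_IR v (rsv_alloc v tb B) p.

Definition rsv_expected_welfare n (v : 'I_n -> profile n -> R)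
    (tb : {set 'I_n} -> ('I_n -> R) -> {set 'I_n}) (s : profile n) : R :=
  (/ 2 ^ n) * \big[Rplus/0]_(B : {set 'I_n}) rsum (rsv_alloc v tb B s) (fun i => v i s).

(* Optimal welfare max_{S in I} sum_{i in S} v_i(s) (0 if I is empty;
   all values are nonnegative). *)
Definition opt_welfare n (v : 'I_n -> profile n -> R) (I : {set {set 'I_n}})
    (s : profile n) : R :=
  \big[Rmax/0]_(S in I) rsum S (fun i => v i s).

From HB Require Import structures.
From Stdlib Require Import Reals Lra FunctionalExtensionality ClassicalEpsilon.
From mathcomp Require Import all_boot.
Set Implicit Arguments. Unset Strict Implicit. Unset Printing Implicit Defensive.
Local Open Scope R_scope.

(* Telescoping the d-SOS inequality one
   agent at a time gives, for every partition,
     v_i(s) <= v_i(s_A, s_i, 0_B) + d v_i(s_B, s_i, 0_A).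
   Averaging over the 2^n partitions (i lies in B half of the time, and
   (A, B) and (B, A) are equally likely), the expected weight of i is at
   least v_i(s) / (2(d+1)).  For each partition the served set outweighs any
   feasible S restricted to B, and weights never exceed values; summing over
   S and the partitions yields the 1/(2(d+1)) approximation.

   Raising s_i raises only w_i, strictly, so the
   argmax allocation is monotone; threshold payments (pay the value at the
   infimum of the reports with which one is still served) then make every
   deterministic mechanism in the support ex-post IC-IR. *)

Lemma Rplus_assoc_law : associative Rplus.
Proof. by move=> x y z; rewrite Rplus_assoc. Qed.
Lemma Rplus_comm_law : commutative Rplus.
Proof. by move=> x y; rewrite Rplus_comm. Qed.
Lemma Rplus_left_id : left_id 0 Rplus.
Proof. by move=> x; rewrite Rplus_0_l. Qed.
HB.instance Definition _ :=
  Monoid.isComLaw.Build R 0 Rplus Rplus_assoc_law Rplus_comm_law Rplus_left_id.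

Section RealSums.
Variable T : finType.
Implicit Types (P : pred T) (f g : T -> R).

Lemma rsum_le P f g : (forall i, P i -> f i <= g i) ->
  \big[Rplus/0]_(i | P i) f i <= \big[Rplus/0]_(i | P i) g i.
Proof. by move=> fg; apply: (big_ind2 Rle) => //; [lra | move=> *; lra]. Qed.

Lemma rsum_ge0 P f : (forall i, P i -> 0 <= f i) -> 0 <= \big[Rplus/0]_(i | P i) f i.
Proof. by move=> f_ge0; apply: (big_ind (Rle 0)) => //; [lra | move=> *; lra]. Qed.

Lemma rsum_mull c P f :
  c * \big[Rplus/0]_(i | P i) f i = \big[Rplus/0]_(i | P i) (c * f i).
Proof. by apply: (big_ind2 (fun x y => c * x = y)) => // [|? ? ? ? <- <-]; lra. Qed.

Lemma rsum_const c : \big[Rplus/0]_(i : T) c = INR #|T| * c.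
Proof.
rewrite big_const -[X in iter X](@eq_card _ T) //.
by elim: #|T| => [|m IH]; rewrite ?iterS ?IH ?S_INR /=; lra.
Qed.
End RealSums.

Lemma rsum_change n (S : {set 'I_n}) (w w' : 'I_n -> R) i :
  (forall k, k != i -> w' k = w k) ->
  rsum S w' = rsum S w + (if i \in S then w' i - w i else 0).
Proof.
move=> w'w; rewrite /rsum; case: ifP => iS.
- rewrite (bigD1 i iS) [in RHS](bigD1 i iS) /= (eq_bigr w); first lra.
  by move=> k /andP [_ ki]; apply: w'w.
- rewrite (eq_bigr w) ?Rplus_0_r // => k kS.
  by apply: w'w; apply: contraTneq kS => ->; rewrite iS.
Qed.

Lemma card_partitions n : INR #|{set 'I_n}| = 2 ^ n.
Proof.
rewrite -cardsT -powersetT card_powerset cardsT card_ord.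
by elim: n => [|m IH] //=; rewrite expnS mult_INR IH.
Qed.

Definition restrict n (A : {set 'I_n}) (s : profile n) : profile n :=
  fun k => if k \in A then s k else 0.

Section Restriction.
Variables (n : nat) (s : profile n).
Implicit Types A C : {set 'I_n}.

Lemma restrict_nonneg A : nonneg_profile s -> nonneg_profile (restrict A s).
Proof. by move=> s_ge0 k; rewrite /restrict; case: ifP => _; [apply: s_ge0 | lra]. Qed.

Lemma restrictT : restrict setT s = s.
Proof. by apply: functional_extensionality => k; rewrite /restrict inE. Qed.

Lemma restrict_le A C : nonneg_profile s -> A \subset C ->
  forall k, restrict A s k <= restrict C s k.
Proof.
move=> s_ge0 AC k; rewrite /restrict.
case: ifP => [/(subsetP AC) -> | _]; first lra.
by case: ifP => _; [apply: s_ge0 | lra].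
Qed.

Lemma upd_restrict_add A j : j \notin A ->
  upd (restrict A s) j (s j) = restrict (j |: A) s.
Proof.
move=> jA; apply: functional_extensionality => k; rewrite /upd /restrict !inE.
by case: eqP => [-> | _].
Qed.

Lemma upd_restrict_zero A j : j \notin A -> upd (restrict A s) j 0 = restrict A s.
Proof.
move=> jA; apply: functional_extensionality => k; rewrite /upd /restrict.
by case: eqP => [-> | _]; rewrite ?(negbTE jA).
Qed.

Lemma restrict_upd_out A i t : i \notin A -> restrict A (upd s i t) = restrict A s.
Proof.
move=> iA; apply: functional_extensionality => k; rewrite /restrict /upd.
by case: ifP => // kA; case: eqP => // ki; rewrite -ki kA in iA.
Qed.

Lemma restrict_upd_in A i t : i \in A -> restrict A (upd s i t) = upd (restrict A s) i t.
Proof.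
move=> iA; apply: functional_extensionality => k; rewrite /restrict /upd.
by case: eqP => [-> | _]; rewrite ?iA.
Qed.
End Restriction.

Lemma Rle_scaled_trans d a b c x y z :
  b - a <= d * (y - x) -> c - b <= d * (z - y) -> c - a <= d * (z - x).
Proof. rewrite !Rmult_minus_distr_l; lra. Qed.

Section DSOS.
Variables (n : nat) (d : R) (f : profile n -> R) (s : profile n).
Hypotheses (f_dSOS : dSOS d f) (s_ge0 : nonneg_profile s).

(* One agent j: this is the d-SOS inequality itself, with j's signal raised
   from 0 to s_j on top of s_P and of the smaller profile s_Q. *)
Lemma dSOS_reveal_one (P Q : {set 'I_n}) j : j \notin P -> Q \subset P ->
  f (restrict (j |: P) s) - f (restrict P s) <=
  d * (f (restrict (j |: Q) s) - f (restrict Q s)).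
Proof.
move=> jP QP; have jQ : j \notin Q := contra (subsetP QP j) jP.
have := @f_dSOS j _ _ _ (restrict_nonneg P s_ge0) (restrict_nonneg Q s_ge0) (s_ge0 j).
have -> : restrict P s j = 0 by rewrite /restrict (negbTE jP).
rewrite Rplus_0_l !upd_restrict_add // upd_restrict_zero // => sos.
by apply/Rge_le/sos => k _; apply: restrict_le.
Qed.

Lemma dSOS_reveal_seq (P Q : {set 'I_n}) (l : seq 'I_n) : Q \subset P ->
  (forall k, k \in l -> k \notin P) ->
  f (restrict (P :|: [set:: l]) s) - f (restrict P s) <=
  d * (f (restrict (Q :|: [set:: l]) s) - f (restrict Q s)).
Proof.
move=> QP; elim: l => [|j l IH] lP; first by rewrite set_nil !setU0; lra.
have {}IH := IH (fun k kl => lP k (mem_behead (s := j :: l) kl)).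
rewrite set_cons (setUCA P) (setUCA Q).
case: (boolP (j \in [set:: l])) => jl.
  have absorb X : [set j] :|: (X :|: [set:: l]) = X :|: [set:: l].
    by apply/setUidPr; rewrite sub1set inE jl orbT.
  by rewrite !absorb.
have jPl : j \notin P :|: [set:: l] by rewrite in_setU negb_or jl (lP j (mem_head j l)).
apply: Rle_scaled_trans IH _.
exact: dSOS_reveal_one jPl (setSU [set:: l] QP).
Qed.

Lemma dSOS_split (B : {set 'I_n}) i : 0 <= d ->
  (forall s', nonneg_profile s' -> 0 <= f s') ->
  f s <= f (restrict (i |: ~: B) s) + d * f (restrict (i |: B) s).
Proof.
move=> d_ge0 f_ge0.
have iP : [set i] \subset i |: ~: B by rewrite sub1set setU11.
have rest_out k : k \in enum (B :\ i) -> k \notin i |: ~: B.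
  by rewrite mem_enum !inE negb_or negbK.
have := dSOS_reveal_seq iP rest_out.
have -> : (i |: ~: B) :|: [set:: enum (B :\ i)] = setT.
  by apply/setP => k; rewrite !inE mem_enum !inE; case: (k == i); case: (k \in B).
have -> : [set i] :|: [set:: enum (B :\ i)] = i |: B.
  by apply/setP => k; rewrite !inE mem_enum !inE; case: (k == i); case: (k \in B).
have := Rmult_le_pos _ _ d_ge0 (f_ge0 _ (restrict_nonneg [set i] s_ge0)).
rewrite restrictT Rmult_minus_distr_l; lra.
Qed.
End DSOS.

Lemma rsv_weightsE n (v : 'I_n -> profile n -> R) (B : {set 'I_n}) s i :
  rsv_weights v B s i = if i \in B then v i (restrict (i |: ~: B) s) else 0.
Proof.
rewrite /rsv_weights; case: ifP => // iB; congr (v i _).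
by apply: functional_extensionality => k; rewrite /restrict !inE orbC.
Qed.

Lemma rsv_weight_le_value n (v : 'I_n -> profile n -> R) B s i :
  valuations_ok v -> nonneg_profile s -> rsv_weights v B s i <= v i s.
Proof.
move=> [v_ge0 [v_mono _]] s_ge0; rewrite rsv_weightsE; case: ifP => _; last exact: v_ge0.
apply: v_mono; first exact: restrict_nonneg.
by move=> k; rewrite -[X in _ <= X k](restrictT s); apply: restrict_le; rewrite ?subsetT.
Qed.

Definition toggle n (i : 'I_n) (B : {set 'I_n}) : {set 'I_n} :=
  [set k | (k == i) (+) (k \in B)].

Lemma toggleK n (i : 'I_n) : involutive (toggle i).
Proof. by move=> B; apply/setP => k; rewrite !inE; case: (k == i); case: (k \in B). Qed.

Lemma mem_toggle n (i : 'I_n) B : (i \in toggle i B) = (i \notin B).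
Proof. by rewrite inE eqxx. Qed.

Lemma revealed_toggle n (i : 'I_n) B : i |: ~: toggle i B = i |: ~: B.
Proof. by apply/setP => k; rewrite !inE; case: (k == i). Qed.

(* Averaged over the 2^n partitions, the weight of agent i is at least a
   1/(2(d+1)) fraction of its value: each agent is sampled half of the time,
   and d-SOS splits v_i(s) between the two complementary revealed sides. *)
Lemma rsv_weight_average n (v : 'I_n -> profile n -> R) d s i :
  valuations_ok v -> 0 <= d -> dSOS d (v i) -> nonneg_profile s ->
  2 ^ n * v i s <= 2 * (d + 1) * \big[Rplus/0]_(B : {set 'I_n}) rsv_weights v B s i.
Proof.
move=> [v_ge0 _] d_ge0 v_dSOS s_ge0.
pose G (B : {set 'I_n}) := v i (restrict (i |: ~: B) s).
set W := \big[Rplus/0]_(B : {set 'I_n}) rsv_weights v B s i.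
have sampled_half : W + W = \big[Rplus/0]_(B : {set 'I_n}) G B.
  rewrite {1}/W [X in _ + X](reindex_inj (inv_inj (toggleK i))) -big_split /=.
  apply: eq_bigr => B _; rewrite !rsv_weightsE mem_toggle revealed_toggle /G.
  by case: (i \in B) => /=; lra.
have complement : \big[Rplus/0]_(B : {set 'I_n}) G (~: B) =
                   \big[Rplus/0]_(B : {set 'I_n}) G B.
  by rewrite [RHS](reindex_inj (@setC_inj _)).
have split : \big[Rplus/0]_(B : {set 'I_n}) v i s <=
             \big[Rplus/0]_(B : {set 'I_n}) (G B + d * G (~: B)).
  apply: rsum_le => B _; rewrite /G setCK; apply: dSOS_split => //.
  by move=> s' s'_ge0; apply: v_ge0.
rewrite big_split /= -rsum_mull complement -sampled_half in split.
rewrite rsum_const card_partitions in split.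
lra.
Qed.

(* For a fixed partition, the welfare of the RS-V allocation dominates the
   total weight of any feasible set: restrict it to B (downward closure) and
   compare with the weight-maximizing set. *)
Lemma rsv_partition_welfare n (I : {set {set 'I_n}}) v tb (s : profile n) B S :
  downward_closed I -> valuations_ok v -> argmax_rule I tb -> nonneg_profile s ->
  S \in I -> rsum S (rsv_weights v B s) <= rsum (rsv_alloc v tb B s) (fun i => v i s).
Proof.
move=> I_closed v_ok tb_argmax s_ge0 SI.
have [_ [_ alloc_opt]] := tb_argmax B (rsv_weights v B s).
have outside_B : rsum S (rsv_weights v B s) = rsum (S :&: B) (rsv_weights v B s).
  rewrite /rsum (big_setID B) /= [X in _ + X]big1 ?Rplus_0_r // => k.
  by rewrite inE => /andP [kB _]; rewrite rsv_weightsE (negbTE kB).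
rewrite outside_B; apply: Rle_trans (alloc_opt _ _ (subsetIr S B)) _.
  exact: I_closed SI (subsetIl S B).
by apply: rsum_le => k _; apply: rsv_weight_le_value.
Qed.

Lemma opt_welfare_le n (v : 'I_n -> profile n -> R) (I : {set {set 'I_n}}) s c :
  0 <= c ->
  (forall S, S \in I -> rsum S (fun i => v i s) <= c) -> opt_welfare v I s <= c.
Proof.
move=> c_ge0 bound; apply: (big_ind (fun x => x <= c)) => //.
by move=> x y; apply: Rmax_lub.
Qed.

Theorem rsv_welfare n (I : {set {set 'I_n}}) d v tb (s : profile n) :
  downward_closed I -> 0 <= d -> valuations_ok v -> (forall i, dSOS d (v i)) ->
  argmax_rule I tb -> nonneg_profile s ->
  rsv_expected_welfare v tb s >= / (2 * (d + 1)) * opt_welfare v I s.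
Proof.
move=> I_closed d_ge0 v_ok v_dSOS tb_argmax s_ge0.
have pow_gt0 : 0 < 2 ^ n by apply: pow_lt; lra.
set W := \big[Rplus/0]_(B : {set 'I_n}) rsum (rsv_alloc v tb B s) (fun i => v i s).
set E := rsv_expected_welfare v tb s.
have E_W : E = / 2 ^ n * W by [].
have E_ge0 : 0 <= E.
  rewrite E_W; apply: Rmult_le_pos; first by apply/Rlt_le/Rinv_0_lt_compat.
  by apply: rsum_ge0 => B _; apply: rsum_ge0 => i _; apply: (proj1 v_ok).
have feasible_le S : S \in I -> rsum S (fun i => v i s) <= 2 * (d + 1) * E.
  move=> SI; apply: (Rmult_le_reg_l (2 ^ n)) => //.
  have -> : 2 ^ n * (2 * (d + 1) * E) = 2 * (d + 1) * W by rewrite E_W; field; lra.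
  have weights_le : \big[Rplus/0]_(B : {set 'I_n}) rsum S (rsv_weights v B s) <= W.
    apply: rsum_le => B _.
    exact: rsv_partition_welfare I_closed v_ok tb_argmax s_ge0 SI.
  apply: (Rle_trans _ _ _ _ (Rmult_le_compat_l (2 * (d + 1)) _ _ ltac:(lra) weights_le)).
  rewrite /rsum exchange_big /= !rsum_mull.
  by apply: rsum_le => i _; apply: rsv_weight_average.
have opt_le := opt_welfare_le (Rmult_le_pos (2 * (d + 1)) E ltac:(lra) E_ge0) feasible_le.
apply/Rle_ge; apply: (Rmult_le_reg_l (2 * (d + 1))); first lra.
by rewrite -Rmult_assoc Rinv_r ?Rmult_1_l; lra.
Qed.

(* Infimum of a set of reals; nonempty sets bounded below by 0 have one, by
   completeness of R applied to the reflected set. *)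
Definition is_infimum (T : R -> Prop) (m : R) : Prop :=
  (forall t, T t -> m <= t) /\ (forall y, (forall t, T t -> y <= t) -> y <= m).

Lemma infimum_exists (T : R -> Prop) :
  (exists t, T t) -> (forall t, T t -> 0 <= t) -> exists m, is_infimum T m.
Proof.
move=> [t0 Tt0] T_ge0.
have bounded : bound (fun y => T (- y)) by exists 0 => y /T_ge0; lra.
have nonempty : exists y, T (- y) by exists (- t0); rewrite Ropp_involutive.
have [m [m_ub m_least]] := completeness _ bounded nonempty.
exists (- m); split.
- move=> t Tt; have /m_ub : T (- - t) by rewrite Ropp_involutive.
  lra.
- move=> y y_lb; suff : m <= - y by lra.
  by apply: m_least => z /y_lb; lra.
Qed.

Definition monotone_alloc n (x : profile n -> {set 'I_n}) : Prop :=
  forall s i t t', nonneg_profile s -> 0 <= t -> t <= t' ->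
    i \in x (upd s i t) -> i \in x (upd s i t').

Lemma upd_id n (s : profile n) i : upd s i (s i) = s.
Proof. by apply: functional_extensionality => k; rewrite /upd; case: eqP => [-> |]. Qed.

Lemma upd_upd n (s : profile n) i r t : upd (upd s i r) i t = upd s i t.
Proof. by apply: functional_extensionality => k; rewrite /upd; case: (k == i). Qed.

Lemma upd_nonneg n (s : profile n) i t :
  nonneg_profile s -> 0 <= t -> nonneg_profile (upd s i t).
Proof. by move=> s_ge0 t_ge0 k; rewrite /upd; case: (k == i). Qed.

(* Threshold payments: a served agent pays its value at the smallest report
   with which it would still be served (others' reports fixed). *)
Section ThresholdPayments.
Variables (n : nat) (v : 'I_n -> profile n -> R) (x : profile n -> {set 'I_n}).

Definition winning_reports i (rep : profile n) (t : R) : Prop :=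
  0 <= t /\ i \in x (upd rep i t).

Definition threshold i (rep : profile n) : R :=
  epsilon (inhabits 0) (is_infimum (winning_reports i rep)).

Definition threshold_payment i (rep : profile n) : R :=
  if i \in x rep then v i (upd rep i (threshold i rep)) else 0.

Lemma threshold_spec i rep : (exists t, winning_reports i rep t) ->
  is_infimum (winning_reports i rep) (threshold i rep).
Proof. by move=> win; apply: epsilon_spec; apply: infimum_exists => // t []. Qed.

Lemma threshold_upd i (s : profile n) r : threshold i (upd s i r) = threshold i s.
Proof.
rewrite /threshold /winning_reports.
congr (epsilon _ (is_infimum _)).
by apply: functional_extensionality => t; rewrite upd_upd.
Qed.

Lemma threshold_utility i (s : profile n) r :
  utility v x threshold_payment i s (upd s i r) =
  if i \in x (upd s i r) then v i s - v i (upd s i (threshold i s)) else 0.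
Proof.
rewrite /utility /threshold_payment threshold_upd upd_upd.
by case: ifP => _; lra.
Qed.

Hypothesis v_mono : forall j s s', nonneg_profile s -> (forall k, s k <= s' k) ->
  v j s <= v j s'.
Hypothesis x_mono : monotone_alloc x.

(* A served agent's threshold lies in [0, s_i], a losing agent's lies above
   s_i; hence raising the own signal to the threshold moves the value the
   right way. *)
Lemma threshold_value_winner i (s : profile n) : nonneg_profile s ->
  i \in x s -> v i (upd s i (threshold i s)) <= v i s.
Proof.
move=> s_ge0 win.
have win_s : winning_reports i s (s i) by split; rewrite ?upd_id.
have [th_lb th_glb] := threshold_spec (ex_intro _ _ win_s).
have th_ge0 : 0 <= threshold i s by apply: th_glb => t [].
rewrite -[X in _ <= v i X](upd_id s i); apply: v_mono; first exact: upd_nonneg.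
by move=> k; rewrite /upd; case: (k == i); [apply: th_lb | lra].
Qed.

Lemma threshold_value_loser i (s : profile n) r : nonneg_profile s ->
  i \notin x s -> i \in x (upd s i r) -> 0 <= r ->
  v i s <= v i (upd s i (threshold i s)).
Proof.
move=> s_ge0 lose win_r r_ge0.
have [_ th_glb] := threshold_spec (ex_intro _ r (conj r_ge0 win_r)).
have si_le : s i <= threshold i s.
  apply: th_glb => t [t_ge0 win_t]; apply: Rnot_lt_le => t_lt.
  have := x_mono s_ge0 t_ge0 (Rlt_le _ _ t_lt) win_t.
  by rewrite upd_id (negbTE lose).
rewrite -[X in v i X <= _](upd_id s i); apply: v_mono; first exact: upd_nonneg.
by move=> k; rewrite /upd; case: (k == i); lra.
Qed.

Theorem threshold_IC_IR : expost_IC_IR v x threshold_payment.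
Proof.
have truthful s i : utility v x threshold_payment i s s =
    if i \in x s then v i s - v i (upd s i (threshold i s)) else 0.
  by rewrite -{2}(upd_id s i) threshold_utility upd_id.
split=> [s i r s_ge0 r_ge0 | s i s_ge0]; rewrite truthful.
- rewrite threshold_utility; case: ifP => [win | lose].
  + by case: ifP => _; have := threshold_value_winner s_ge0 win; lra.
  + case: ifP => [win_r | _]; last lra.
    by have := threshold_value_loser s_ge0 (negbT lose) win_r r_ge0; lra.
- by case: ifP => [win | _]; [have := threshold_value_winner s_ge0 win |]; lra.
Qed.
End ThresholdPayments.

Lemma argmax_weight_monotone n (I : {set {set 'I_n}}) tb B (w w' : 'I_n -> R) i :
  argmax_rule I tb -> (forall k, k != i -> w' k = w k) -> w i < w' i ->
  i \in tb B w -> i \in tb B w'.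
Proof.
move=> tb_argmax w'w w_lt sel; apply/negPn/negP => not_sel.
have [sub [feas opt]] := tb_argmax B w.
have [sub' [feas' opt']] := tb_argmax B w'.
have := rsum_change (tb B w') w'w; rewrite (negbTE not_sel).
have := rsum_change (tb B w) w'w; rewrite sel.
have := opt _ feas' sub'; have := opt' _ feas sub; lra.
Qed.

(* Hence, for every partition, the RS-V allocation is monotone: an agent's
   report only moves its own weight, strictly increasingly. *)
Lemma rsv_alloc_monotone n (I : {set {set 'I_n}}) v tb (B : {set 'I_n}) :
  valuations_ok v -> argmax_rule I tb -> monotone_alloc (rsv_alloc v tb B).
Proof.
move=> [_ [_ v_strict]] tb_argmax s i t t' s_ge0 t_ge0 [t_lt | <-] // served.
have iB : i \in B.
  by have [/subsetP sub _] := tb_argmax B (rsv_weights v B (upd s i t)); apply: sub.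
apply: argmax_weight_monotone tb_argmax _ _ served.
- move=> k ki; rewrite !rsv_weightsE; case: ifP => // kB.
  by rewrite !restrict_upd_out // !inE negb_or eq_sym ki negbK iB.
- rewrite !rsv_weightsE iB !restrict_upd_in ?setU11 //.
  by apply: v_strict; first exact: restrict_nonneg.
Qed.

Theorem mainTheorem3 (n : nat) (I : {set {set 'I_n}}) (d : R)
    (v : 'I_n -> profile n -> R)
    (tb : {set 'I_n} -> ('I_n -> R) -> {set 'I_n}) :
  downward_closed I ->
  1 <= d ->
  valuations_ok v ->
  (forall i, dSOS d (v i)) ->
  argmax_rule I tb ->
  rsv_universally_IC_IR v tb /\
  (forall s : profile n, nonneg_profile s ->
     rsv_expected_welfare v tb s >= / (2 * (d + 1)) * opt_welfare v I s).
Proof.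
move=> I_closed d_ge1 v_ok v_dSOS tb_argmax; split.
- move=> B; exists (threshold_payment v (rsv_alloc v tb B)).
  apply: threshold_IC_IR; first exact: (proj1 (proj2 v_ok)).
  exact: rsv_alloc_monotone tb_argmax.
- by move=> s s_ge0; apply: rsv_welfare => //; lra.
Qed.
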